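(* For every $\delta\in(0,1]$ there is $c>0$ such that every eigenvalue $\lambda$ of the matrix $a(u)^{-1}m(u)$ satisfies $\lambda\ge c$, for all $u\in\mathbb{R}^3$ with $|u|\le1-\delta$.
   Context: $\rho\in C_0^\infty(\mathbb{R}^3)$ radial with $\mathsf e=\int\rho\neq0$, $\hat\rho(k)=(2\pi)^{-3/2}\int\rho e^{-ik\cdot x}$. For $|u|<1$: $\gamma=(1-|u|^2)^{-1/2}$, $m_0(u)w=\gamma w+\gamma^3(u\cdot w)u$, $m_e=\frac13\int|\hat\rho(k)|^2|k|^{-2}dk$, $\varphi(s)=\frac{1}{2s^2(1-s^2)}-\frac{1}{4s^3}\log\frac{1+s}{1-s}$, $m_f(u)w=3m_e(\varphi(|u|)w+|u|^{-1}\varphi'(|u|)(u\cdot w)u)$, $m=m_0+m_f$, $a(u)w=\frac{\mathsf e^2}{12\pi}[\gamma^4w+4\gamma^6(u\cdot w)u]$. *)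

From HB Require Import structures.
From mathcomp Require Import all_boot all_order all_algebra.
From mathcomp Require Import all_classical all_reals all_analysis.

Set Implicit Arguments.
Unset Strict Implicit.
Unset Printing Implicit Defensive.

Import Order.TTheory GRing.Theory Num.Theory.
Import numFieldNormedType.Exports.
Local Open Scope classical_set_scope.
Local Open Scope ring_scope.

Section Defs.
Variable R : realType.

Definition dot3 (u w : 'rV[R]_3) : R := \sum_(i < 3) u 0 i * w 0 i.
Definition eucl3 (u : 'rV[R]_3) : R := Num.sqrt (dot3 u u).

Definition leb3 := (((@lebesgue_measure R) \x (@lebesgue_measure R)) \x (@lebesgue_measure R))%E.

Definition vec3 (p : (R * R) * R) : 'rV[R]_3 :=
  \row_(i < 3) nth 0 [:: p.1.1; p.1.2; p.2] i.

Definition int3 (f : 'rV[R]_3 -> R) : R :=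
  Rintegral leb3 setT (fun p => f (vec3 p)).

(* Smoothness: C^infinity via iterated directional derivatives
   (all directional derivatives of all orders exist everywhere and are continuous). *)
Fixpoint Ck (n : nat) (f : 'rV[R]_3 -> R) : Prop :=
  match n with
  | 0%N => continuous f
  | k.+1 => continuous f /\ (forall x v, derivable f x v) /\
            (forall v, Ck k (fun x => 'D_v f x))
  end.
Definition smooth3 (f : 'rV[R]_3 -> R) : Prop := forall n, Ck n f.

Definition compact_support3 (f : 'rV[R]_3 -> R) : Prop :=
  exists r : R, forall x, r < eucl3 x -> f x = 0.

Definition radial3 (f : 'rV[R]_3 -> R) : Prop :=
  forall x y, eucl3 x = eucl3 y -> f x = f y.

Definition total_charge (rho : 'rV[R]_3 -> R) : R := int3 rho.

(* Fourier transform hat rho(k) = (2 pi)^{-3/2} \int rho(x) e^{-i k.x} dx,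
   split into real and imaginary parts. *)
Definition fourier_re (rho : 'rV[R]_3 -> R) (k : 'rV[R]_3) : R :=
  (Num.sqrt ((2 * pi) ^+ 3))^-1 * int3 (fun x => rho x * cos (dot3 k x)).
Definition fourier_im (rho : 'rV[R]_3 -> R) (k : 'rV[R]_3) : R :=
  - ((Num.sqrt ((2 * pi) ^+ 3))^-1 * int3 (fun x => rho x * sin (dot3 k x))).
Definition fourier_abs2 (rho : 'rV[R]_3 -> R) (k : 'rV[R]_3) : R :=
  fourier_re rho k ^+ 2 + fourier_im rho k ^+ 2.

Definition m_e (rho : 'rV[R]_3 -> R) : R :=
  3^-1 * int3 (fun k => fourier_abs2 rho k / eucl3 k ^+ 2).

Definition gamma (u : 'rV[R]_3) : R := (Num.sqrt (1 - eucl3 u ^+ 2))^-1.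

(* phi(s), extended at s = 0 by its limit 1/3 (removable singularity). *)
Definition phi (s : R) : R :=
  if s == 0 then 3^-1
  else (2 * s ^+ 2 * (1 - s ^+ 2))^-1 - (4 * s ^+ 3)^-1 * ln ((1 + s) / (1 - s)).

(* u^T u : the matrix of w |-> (u.w) u (symmetric) *)
Definition outer3 (u : 'rV[R]_3) : 'M[R]_3 := u^T *m u.

Definition m0 (u : 'rV[R]_3) : 'M[R]_3 :=
  (gamma u)%:M + (gamma u ^+ 3) *: outer3 u.

Definition mf (rho : 'rV[R]_3 -> R) (u : 'rV[R]_3) : 'M[R]_3 :=
  (3 * m_e rho) *: ((phi (eucl3 u))%:M
                     + ((eucl3 u)^-1 * derive1 phi (eucl3 u)) *: outer3 u).

Definition mass (rho : 'rV[R]_3 -> R) (u : 'rV[R]_3) : 'M[R]_3 := m0 u + mf rho u.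

Definition amat (rho : 'rV[R]_3 -> R) (u : 'rV[R]_3) : 'M[R]_3 :=
  (total_charge rho ^+ 2 / (12 * pi)) *: ((gamma u ^+ 4)%:M + (4 * gamma u ^+ 6) *: outer3 u).

End Defs.

(* The quadratic form of a(u) is e^2/(12 pi) (gamma^4 |w|^2 + 4 gamma^6 (u.w)^2): it is
   positive definite and, by Cauchy-Schwarz, at most e^2/(12 pi) (gamma^4 + 4 gamma^6) |w|^2.
   The quadratic form of m(u) is at least |w|^2, since gamma >= 1, m_e >= 0 and phi, phi' >= 0
   on [0, 1).  If v a^-1 m = lambda v, then w = v a^-1 satisfies w m w^T = lambda w a w^T,
   so lambda >= (e^2/(12 pi) (gamma^4 + 4 gamma^6))^-1, and gamma <= (1 - (1 - delta)^2)^(-1/2)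
   when |u| <= 1 - delta.
   The signs of phi and phi' come from phi = P / (4 s^3 (1 - s^2)) and
   phi' = Q / (4 s^4 (1 - s^2)^2), where P and Q vanish at 0 and
   P' = 2 s log((1 + s)/(1 - s)) >= 0, Q' = 12 s P >= 0. *)
From HB Require Import structures.
From mathcomp Require Import all_boot all_order all_algebra.
From mathcomp Require Import all_classical all_reals all_analysis.
From mathcomp Require Import ring.
Import Order.TTheory GRing.Theory Num.Theory.
Import numFieldNormedType.Exports.
Local Open Scope ring_scope.

Section PhiSign.
Context {R : realType}.
Implicit Types x : R.

Lemma is_derive_ge0_ndecr [f df : R -> R] [a b s : R] :
  (forall x, a <= x < b -> is_derive x 1 f (df x)) ->
  (forall x, a < x < b -> 0 <= df x) ->
  a <= s < b -> f a <= f s.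
Proof.
move=> f_df df_ge0 /andP[a_les s_ltb].
have in_ab x : a <= x <= s -> a <= x < b.
  by case/andP=> a_lex x_les; rewrite a_lex (le_lt_trans x_les).
apply: (@ger0_derive1_ndecr R f a s) => //.
- move=> x; rewrite in_itv /= => /andP[a_ltx x_lts].
  by have [] := f_df x (in_ab x _); rewrite ?ltW ?a_ltx ?x_lts.
- move=> x; rewrite in_itv /= => /andP[a_ltx x_lts].
  have x_in : a <= x <= s by rewrite !ltW.
  have d_x := f_df x (in_ab x x_in).
  by rewrite derive1E derive_val df_ge0 // a_ltx (lt_trans x_lts).
- apply: derivable_within_continuous => x; rewrite in_itv /= => x_in.
  by have [] := f_df x (in_ab x x_in).
Qed.

Lemma one_minus_sqr_gt0 x : 0 <= x < 1 -> 0 < 1 - x ^+ 2.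
Proof. by move=> /andP[x_ge0 x_lt1]; rewrite subr_gt0 expr_lt1. Qed.

Definition ln_ratio x := ln (1 + x) - ln (1 - x).

Lemma ln_ratio0 : ln_ratio 0 = 0.
Proof. by rewrite /ln_ratio addr0 subr0 subrr. Qed.

Lemma ln_ratio_ge0 x : 0 <= x < 1 -> 0 <= ln_ratio x.
Proof.
move=> /andP[x_ge0 x_lt1]; rewrite subr_ge0 ler_ln ?posrE ?subr_gt0 //.
- by rewrite lerD2l (le_trans _ x_ge0) // oppr_le0.
- by rewrite (lt_le_trans ltr01) // lerDl.
Qed.

Lemma is_derive_ln_ratio x : 0 <= x < 1 ->
  is_derive x 1 ln_ratio (2 / (1 - x ^+ 2)).
Proof.
move=> x01; have /andP[x_ge0 x_lt1] := x01.
have x1p_gt0 : 0 < 1 + x by rewrite (lt_le_trans ltr01) // lerDl.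
have x1m_gt0 : 0 < 1 - x by rewrite subr_gt0.
have d_plus : is_derive x 1 (@ln R \o (fun y => 1 + y)) ((1 + x)^-1 * 1).
  apply: is_derive1_comp; first exact: is_derive1_ln.
  by have := is_deriveD (is_derive_cst (1:R) x 1) (is_derive_id x (1:R)); rewrite add0r.
have d_minus : is_derive x 1 (@ln R \o (fun y => 1 - y)) ((1 - x)^-1 * (-1)).
  apply: is_derive1_comp; first exact: is_derive1_ln.
  by have := is_deriveB (is_derive_cst (1:R) x 1) (is_derive_id x (1:R)); rewrite sub0r.
apply: is_derive_eq (is_deriveB d_plus d_minus) _.
have sqr_neq0 : 1 - x ^+ 2 != 0 by rewrite gt_eqF // one_minus_sqr_gt0.
by field; rewrite sqr_neq0 !gt_eqF.
Qed.

Definition phi_num x := 2 * x - (1 - x ^+ 2) * ln_ratio x.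
Definition dphi_num x := 3 * (1 - x ^+ 2) ^+ 2 * ln_ratio x - 6 * x + 10 * x ^+ 3.
Definition phi_den x := 4 * x ^+ 3 * (1 - x ^+ 2).

Lemma phiE x : 0 < x < 1 -> phi x = phi_num x / phi_den x.
Proof.
move=> /andP[x_gt0 x_lt1].
have x_neq0 : x != 0 by rewrite gt_eqF.
have sqr_neq0 : 1 - x ^+ 2 != 0.
  by rewrite gt_eqF // one_minus_sqr_gt0 // (ltW x_gt0) x_lt1.
have x1p_gt0 : 0 < 1 + x by rewrite (lt_trans ltr01) // ltrDl.
have x1m_gt0 : 0 < 1 - x by rewrite subr_gt0.
rewrite /phi (negbTE x_neq0) /phi_num /phi_den /ln_ratio.
rewrite lnM ?posrE ?invr_gt0 // lnV ?posrE //.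
by field; rewrite x_neq0 sqr_neq0.
Qed.

Lemma is_derive_phi_num x : 0 <= x < 1 ->
  is_derive x 1 phi_num (2 * x * ln_ratio x).
Proof.
move=> x01.
have d_sqr : is_derive x 1 (fun y : R => 1 - y ^+ 2) (- (2 * x)).
  by apply: is_derive_eq; rewrite ![_%:A]mulr1; ring.
have d_lin : is_derive x 1 (fun y : R => 2 * y) 2.
  by apply: is_derive_eq; rewrite [_%:A]mulr1.
have d := is_deriveB d_lin (is_deriveM d_sqr (is_derive_ln_ratio x x01)).
have -> : phi_num = (fun y => 2 * y) - (fun y => 1 - y ^+ 2) * ln_ratio by [].
apply: is_derive_eq d _.
have sqr_neq0 : 1 - x ^+ 2 != 0 by rewrite gt_eqF // one_minus_sqr_gt0.
by rewrite -![_ *: _]/(_ * _); field.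
Qed.

Lemma is_derive_dphi_num x : 0 <= x < 1 ->
  is_derive x 1 dphi_num (12 * x * phi_num x).
Proof.
move=> x01.
have d_sqr2 : is_derive x 1 (fun y : R => 3 * (1 - y ^+ 2) ^+ 2) (- 12 * x * (1 - x ^+ 2)).
  by apply: is_derive_eq; rewrite ?[_%:A]mulr1 -?[_ *: _]/(_ * _) /=; ring.
have d_lin : is_derive x 1 (fun y : R => 6 * y) 6.
  by apply: is_derive_eq; rewrite [_%:A]mulr1.
have d_cub : is_derive x 1 (fun y : R => 10 * y ^+ 3) (30 * x ^+ 2).
  by apply: is_derive_eq; rewrite ?[_%:A]mulr1 -?[_ *: _]/(_ * _) /=; ring.
have d := is_deriveD (is_deriveB (is_deriveM d_sqr2 (is_derive_ln_ratio x x01)) d_lin) d_cub.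
have -> : dphi_num = (fun y => 3 * (1 - y ^+ 2) ^+ 2) * ln_ratio
  - (fun y => 6 * y) + (fun y => 10 * y ^+ 3) by [].
apply: is_derive_eq d _.
have sqr_neq0 : 1 - x ^+ 2 != 0 by rewrite gt_eqF // one_minus_sqr_gt0.
by rewrite -![_ *: _]/(_ * _) /phi_num; field.
Qed.

Lemma phi_num_ge0 x : 0 <= x < 1 -> 0 <= phi_num x.
Proof.
move=> x01; apply: (le_trans _ (is_derive_ge0_ndecr is_derive_phi_num _ x01)).
- by rewrite /phi_num ln_ratio0 !mulr0 subr0.
- move=> y /andP[y_gt0 y_lt1]; have y01 : 0 <= y < 1 by rewrite (ltW y_gt0) y_lt1.
  by rewrite !mulr_ge0 ?ln_ratio_ge0 ?(ltW y_gt0).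
Qed.

Lemma dphi_num_ge0 x : 0 <= x < 1 -> 0 <= dphi_num x.
Proof.
move=> x01; apply: (le_trans _ (is_derive_ge0_ndecr is_derive_dphi_num _ x01)).
- by have -> : dphi_num 0 = 0 by rewrite /dphi_num ln_ratio0; ring.
- move=> y /andP[y_gt0 y_lt1]; have y01 : 0 <= y < 1 by rewrite (ltW y_gt0) y_lt1.
  by rewrite !mulr_ge0 ?phi_num_ge0 ?(ltW y_gt0).
Qed.

Lemma derive1_phi x : 0 < x < 1 ->
  derive1 (@phi R) x = dphi_num x / (4 * x ^+ 4 * (1 - x ^+ 2) ^+ 2).
Proof.
move=> x01; have /andP[x_gt0 x_lt1] := x01.
have x01' : 0 <= x < 1 by rewrite (ltW x_gt0) x_lt1.
have sqr_neq0 : 1 - x ^+ 2 != 0 by rewrite gt_eqF // one_minus_sqr_gt0.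
have x_neq0 : x != 0 by rewrite gt_eqF.
have d_den : is_derive x 1 phi_den (12 * x ^+ 2 - 20 * x ^+ 4).
  by apply: is_derive_eq; rewrite ?[_%:A]mulr1 -?[_ *: _]/(_ * _) /=; ring.
have den_neq0 : phi_den x != 0 by rewrite !mulf_neq0 // ?expf_neq0 // pnatr_eq0.
have d := is_deriveM (is_derive_phi_num x x01') (is_deriveV den_neq0 d_den).
have phi_near : \forall y \near x, phi_num y / phi_den y = phi y.
  apply: filterS (near_in_itvoo _); last by rewrite in_itv /=; exact: x01.
  by move=> y; rewrite in_itv /= => y01; rewrite phiE.
have d_phi := near_eq_is_derive phi_near d.
rewrite derive1E derive_val.
rewrite -![_ *: _]/(_ * _) /dphi_num /phi_num /phi_den.
by field; rewrite sqr_neq0 x_neq0.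
Qed.

Lemma phi_ge0 x : 0 <= x < 1 -> 0 <= phi x.
Proof.
move=> x01; have /andP[x_ge0 x_lt1] := x01.
have [->|x_neq0] := eqVneq x 0; first by rewrite /phi eqxx invr_ge0.
have x_gt0 : 0 < x by rewrite lt_def x_neq0.
rewrite phiE ?x_gt0 // divr_ge0 ?phi_num_ge0 // !mulr_ge0 ?exprn_ge0 //.
exact/ltW/one_minus_sqr_gt0.
Qed.

Lemma derive1_phi_ge0 x : 0 < x < 1 -> 0 <= derive1 (@phi R) x.
Proof.
move=> x01; have /andP[x_gt0 x_lt1] := x01.
rewrite derive1_phi // divr_ge0 ?dphi_num_ge0 ?(ltW x_gt0) // mulr_ge0 ?sqr_ge0 //.
by rewrite !mulr_ge0 ?exprn_ge0 ?sqr_ge0 ?(ltW x_gt0).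
Qed.

End PhiSign.

Section QuadraticForm.
Context {R : realFieldType} {n : nat}.
Implicit Types (A M : 'M[R]_n) (w : 'rV[R]_n).

Definition quad_form A w : R := (w *m A *m w^T) 0 0.

Lemma quad_formD A M w : quad_form (A + M) w = quad_form A w + quad_form M w.
Proof. by rewrite /quad_form mulmxDr mulmxDl mxE. Qed.

Lemma quad_formZ k A w : quad_form (k *: A) w = k * quad_form A w.
Proof. by rewrite /quad_form -scalemxAr -scalemxAl mxE. Qed.

Lemma posdef_unitmx A :
  (forall w, w != 0 -> 0 < quad_form A w) -> A \in unitmx.
Proof.
move=> A_pos; rewrite -row_free_unit -kermx_eq0; apply/negPn/negP => ker_neq0.
have z_ker : (nz_row (kermx A) *m A = 0) by apply/sub_kermxP/nz_row_sub.
have z_neq0 : nz_row (kermx A) != 0 by rewrite nz_row_eq0.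
by have := A_pos _ z_neq0; rewrite /quad_form z_ker mul0mx mxE ltxx.
Qed.

Lemma eigenvalue_invmx_mulmx_ge A M (C lambda : R) : 0 < C ->
  (forall w, w != 0 -> 0 < quad_form A w) ->
  (forall w, quad_form A w <= C * quad_form M w) ->
  eigenvalue (invmx A *m M) lambda -> C^-1 <= lambda.
Proof.
move=> C_gt0 A_pos A_le_M /eigenvalueP[v v_eigen v_neq0].
have A_unit : A \in unitmx by apply: posdef_unitmx.
set w := v *m invmx A.
have vE : v = w *m A by rewrite /w -mulmxA mulVmx // mulmx1.
have w_neq0 : w != 0 by apply: contra v_neq0 => /eqP w0; rewrite vE w0 mul0mx.
have wM : w *m M = lambda *: (w *m A) by rewrite -vE /w -mulmxA v_eigen.
have qM : quad_form M w = lambda * quad_form A w.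
  by rewrite /quad_form wM -scalemxAl mxE.
have qA_gt0 := A_pos w w_neq0.
rewrite -(ler_pM2l C_gt0) mulfV ?gt_eqF // -(ler_pM2r qA_gt0) mul1r -mulrA -qM.
exact: A_le_M.
Qed.
End QuadraticForm.

Section Euclid3.
Context {R : realType}.
Implicit Types u w : 'rV[R]_3.

Lemma mulmx_tr00 u w : (w *m u^T) 0 0 = dot3 u w.
Proof. by rewrite mxE /dot3; apply: eq_bigr => i _; rewrite mxE mulrC. Qed.

Lemma quad_form_scalar (a : R) w : quad_form a%:M w = a * dot3 w w.
Proof. by rewrite /quad_form mul_mx_scalar -scalemxAl mxE mulmx_tr00. Qed.

Lemma quad_form_outer3 u w : quad_form (outer3 u) w = dot3 u w ^+ 2.
Proof.
rewrite /quad_form /outer3 (mulmxA w) -(mulmxA (w *m u^T)) mxE big_ord1 !mulmx_tr00.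
by rewrite expr2 /dot3; congr (_ * _); apply: eq_bigr => i _; rewrite mulrC.
Qed.

Lemma dot3E u w : dot3 u w = u 0 0 * w 0 0 + u 0 1 * w 0 1 + u 0 2%:R * w 0 2%:R.
Proof.
rewrite /dot3 !big_ord_recr big_ord0 /= add0r.
by congr (_ * _ + _ * _ + _ * _); congr (_ _ _); apply: val_inj.
Qed.

Lemma dot3_ge0 w : 0 <= dot3 w w.
Proof. by apply: sumr_ge0 => i _; rewrite -expr2 sqr_ge0. Qed.

Lemma dot3_gt0 w : w != 0 -> 0 < dot3 w w.
Proof.
move=> w_neq0; rewrite lt_def dot3_ge0 andbT; apply: contra w_neq0 => /eqP dot0.
apply/eqP/rowP => j; rewrite mxE.
have : w 0 j ^+ 2 <= 0.
  rewrite -dot0 /dot3 (bigD1 j) //= -expr2 lerDl.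
  by apply: sumr_ge0 => i _; rewrite -expr2 sqr_ge0.
by rewrite le_eqVlt ltNge sqr_ge0 orbF sqrf_eq0 => /eqP.
Qed.

Lemma dot3_eucl3 u : dot3 u u = eucl3 u ^+ 2.
Proof. by rewrite sqr_sqrtr ?dot3_ge0. Qed.

Lemma cauchy_schwarz3 u w : dot3 u w ^+ 2 <= dot3 u u * dot3 w w.
Proof.
rewrite !dot3E -subr_ge0.
set a := u 0 0; set b := u 0 1; set c := u 0 2%:R.
set x := w 0 0; set y := w 0 1; set z := w 0 2%:R.
have -> : (a * a + b * b + c * c) * (x * x + y * y + z * z) - (a * x + b * y + c * z) ^+ 2
  = (a * y - b * x) ^+ 2 + (a * z - c * x) ^+ 2 + (b * z - c * y) ^+ 2 by ring.
by rewrite !addr_ge0 ?sqr_ge0.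
Qed.

End Euclid3.

Section MassBounds.
Context {R : realType}.
Implicit Types (u w : 'rV[R]_3) (rho : 'rV[R]_3 -> R).

Lemma gamma_ge1 u : eucl3 u < 1 -> 1 <= gamma u.
Proof.
move=> u_lt1; have u01 : 0 <= eucl3 u < 1 by rewrite sqrtr_ge0.
rewrite /gamma invf_ge1 ?sqrtr_gt0 ?one_minus_sqr_gt0 //.
by rewrite -[leRHS]sqrtr1 ler_sqrt // gerBl sqr_ge0.
Qed.

Lemma gamma_gt0 u : eucl3 u < 1 -> 0 < gamma u.
Proof. by move=> /gamma_ge1; apply: lt_le_trans. Qed.

Lemma gamma_le u (r : R) : eucl3 u <= r -> r < 1 ->
  gamma u <= (Num.sqrt (1 - r ^+ 2))^-1.
Proof.
move=> u_ler r_lt1; have u_ge0 : 0 <= eucl3 u by rewrite sqrtr_ge0.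
have r01 : 0 <= r < 1 by rewrite r_lt1 (le_trans u_ge0).
have u01 : 0 <= eucl3 u < 1 by rewrite u_ge0 (le_lt_trans u_ler).
rewrite /gamma lef_pV2 ?posrE ?sqrtr_gt0 ?one_minus_sqr_gt0 //.
rewrite ler_sqrt ?one_minus_sqr_gt0 //.
- by apply: lerB => //; rewrite lerXn2r ?nnegrE ?(le_trans u_ge0).
- exact/ltW/one_minus_sqr_gt0.
Qed.

Lemma m_e_ge0 rho : 0 <= m_e rho.
Proof.
rewrite /m_e mulr_ge0 ?invr_ge0 //; apply: Rintegral_ge0 => p _.
by rewrite divr_ge0 ?sqr_ge0 // /fourier_abs2 addr_ge0 ?sqr_ge0.
Qed.

Lemma quad_form_mass rho u w : quad_form (mass rho u) w =
  gamma u * dot3 w w + gamma u ^+ 3 * dot3 u w ^+ 2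
  + 3 * m_e rho * (phi (eucl3 u) * dot3 w w
                   + (eucl3 u)^-1 * derive1 (@phi R) (eucl3 u) * dot3 u w ^+ 2).
Proof.
by rewrite /mass /m0 /mf !quad_formD quad_form_scalar !quad_formZ quad_formD
  quad_form_scalar quad_formZ !quad_form_outer3.
Qed.

Lemma quad_form_amat rho u w : quad_form (amat rho u) w =
  total_charge rho ^+ 2 / (12 * pi)
  * (gamma u ^+ 4 * dot3 w w + 4 * gamma u ^+ 6 * dot3 u w ^+ 2).
Proof. by rewrite /amat quad_formZ quad_formD quad_form_scalar quad_formZ quad_form_outer3. Qed.

Lemma quad_form_mass_ge rho u w : eucl3 u < 1 -> dot3 w w <= quad_form (mass rho u) w.
Proof.
move=> u_lt1; set s := eucl3 u; have s01 : 0 <= s < 1 by rewrite sqrtr_ge0.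
have phi'_ge0 : 0 <= s^-1 * derive1 (@phi R) s.
  have [->|s_neq0] := eqVneq s 0; first by rewrite invr0 mul0r.
  have s_gt0 : 0 < s by rewrite lt_def s_neq0 sqrtr_ge0.
  by rewrite mulr_ge0 ?invr_ge0 ?(ltW s_gt0) // derive1_phi_ge0 // s_gt0; case/andP: s01.
have field_ge0 : 0 <= 3 * m_e rho * (phi s * dot3 w w
                                     + s^-1 * derive1 (@phi R) s * dot3 u w ^+ 2).
  apply: mulr_ge0; first by rewrite mulr_ge0 ?m_e_ge0.
  apply: addr_ge0; first by rewrite mulr_ge0 ?phi_ge0 ?dot3_ge0.
  by rewrite mulr_ge0 ?sqr_ge0.
have g_ge0 := ltW (gamma_gt0 u u_lt1).
rewrite quad_form_mass -addrA; apply: ler_wpDr.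
- by rewrite addr_ge0 // mulr_ge0 ?sqr_ge0 ?exprn_ge0.
- by rewrite ler_peMl ?dot3_ge0 ?gamma_ge1.
Qed.

Lemma quad_form_amat_le rho u w : eucl3 u < 1 -> quad_form (amat rho u) w <=
  total_charge rho ^+ 2 / (12 * pi) * (gamma u ^+ 4 + 4 * gamma u ^+ 6) * dot3 w w.
Proof.
move=> u_lt1; have g_ge0 := ltW (gamma_gt0 u u_lt1).
have uw_le : dot3 u w ^+ 2 <= dot3 w w.
  apply: le_trans (cauchy_schwarz3 u w) _; rewrite ler_piMl ?dot3_ge0 //.
  by rewrite dot3_eucl3 expr_le1 ?sqrtr_ge0 ?ltW.
have K_ge0 : 0 <= total_charge rho ^+ 2 / (12 * pi) by rewrite divr_ge0 ?sqr_ge0 ?mulr_ge0 ?pi_ge0.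
rewrite quad_form_amat; set K := _ / _.
rewrite -[leRHS]mulrA ler_wpM2l //.
by rewrite [leRHS]mulrDl lerD2l -!mulrA !ler_wpM2l ?exprn_ge0.
Qed.

Lemma amat_prefactor_gt0 rho : total_charge rho != 0 ->
  0 < total_charge rho ^+ 2 / (12 * pi).
Proof.
move=> e_neq0; apply: divr_gt0; last by rewrite mulr_gt0 ?pi_gt0.
by rewrite lt_def sqrf_eq0 e_neq0 sqr_ge0.
Qed.

Lemma quad_form_amat_gt0 rho u w : total_charge rho != 0 -> eucl3 u < 1 ->
  w != 0 -> 0 < quad_form (amat rho u) w.
Proof.
move=> e_neq0 u_lt1 w_neq0.
rewrite quad_form_amat mulr_gt0 ?amat_prefactor_gt0 //; apply: ltr_wpDr.
- by rewrite mulr_ge0 ?sqr_ge0 // mulr_ge0 // exprn_ge0 // ltW ?gamma_gt0.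
- by rewrite mulr_gt0 ?exprn_gt0 ?gamma_gt0 ?dot3_gt0.
Qed.

End MassBounds.

Theorem lemma4p1 (R : realType) (rho : 'rV[R]_3 -> R)
  (rho_smooth : smooth3 rho) (rho_supp : compact_support3 rho)
  (rho_radial : radial3 rho) (rho_charge : total_charge rho != 0) :
  forall delta : R, 0 < delta <= 1 ->
  exists c : R, 0 < c /\
    forall (u : 'rV[R]_3), eucl3 u <= 1 - delta ->
    forall lambda : R, eigenvalue (invmx (amat rho u) *m mass rho u) lambda ->
    c <= lambda.
Proof.
move=> delta /andP[delta_gt0 delta_le1].
set r := 1 - delta; have r01 : 0 <= r < 1 by rewrite subr_ge0 delta_le1 ltrBlDr ltrDl.
have /andP[_ r_lt1] := r01.
set G := (Num.sqrt (1 - r ^+ 2))^-1.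
have G_gt0 : 0 < G by rewrite invr_gt0 sqrtr_gt0 one_minus_sqr_gt0.
set K := total_charge rho ^+ 2 / (12 * pi).
have K_gt0 : 0 < K := amat_prefactor_gt0 rho rho_charge.
set C := K * (G ^+ 4 + 4 * G ^+ 6).
have C_gt0 : 0 < C by rewrite mulr_gt0 // addr_gt0 ?exprn_gt0 // mulr_gt0 ?exprn_gt0.
exists C^-1; split; first by rewrite invr_gt0.
move=> u u_ler lambda; have u_lt1 : eucl3 u < 1 := le_lt_trans u_ler r_lt1.
have gamma_ge0 : 0 <= gamma u := ltW (gamma_gt0 u u_lt1).
have gamma_leG : gamma u <= G := gamma_le u r u_ler r_lt1.
apply: eigenvalue_invmx_mulmx_ge C_gt0 _ _ => w; first exact: quad_form_amat_gt0.
apply: le_trans (quad_form_amat_le rho u w u_lt1) _.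
apply: ler_pM; rewrite ?dot3_ge0 ?quad_form_mass_ge //.
- by rewrite mulr_ge0 ?(ltW K_gt0) // addr_ge0 ?exprn_ge0 // mulr_ge0 ?exprn_ge0.
- by rewrite ler_wpM2l ?(ltW K_gt0) // lerD ?ler_wpM2l ?lerXn2r ?nnegrE ?(ltW G_gt0).
Qed.
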